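(* Let $n\ge 3$, let $P(G(n))$ be the power graph of the gyrogroup $G(n)$ (defined in the context), and write $N=2^{n-1}$. Then (1) $dds(P(G(n)))=\big((1,2^n-1),\,(1,N-1,N)^{N-1},\,(1,1,2^n-2)^{N}\big)$, where $(1,2^n-1)$ is the distance degree sequence of $e$, $(1,N-1,N)$ that of each $u\in P(n)\setminus\{e\}$, and $(1,1,2^n-2)$ that of each $u\in H(n)$; (2) $dds_D(P(G(n)))=\big((1,N,\underbrace{0,\dots,0}_{N-3},N-1),\,(1,\underbrace{0,\dots,0}_{N-2},N-1,N)^{N-1},\,(1,1,N-1,\underbrace{0,\dots,0}_{N-3},N-1)^{N}\big)$, where the first sequence is the detour distance degree sequence of $e$, the second that of each $u\in P(n)\setminus\{e\}$, and the third that of each $u\in H(n)$.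
   Context: Let $n\ge 3$ be an integer and $m=2^{n-1}$. Let $P(n)=\{0,1,\dots,m-1\}$, $H(n)=\{m,m+1,\dots,2^n-1\}$ and $G(n)=P(n)\cup H(n)$. For $i,j\in G(n)$ let $t,s,k\in P(n)$ be the residues modulo $m$ (taken in $\{0,\dots,m-1\}$) of $i+j$, $i+(\frac m2-1)j$ and $(\frac m2+1)i+(\frac m2-1)j$, respectively, and define $i\oplus j=t$ if $i,j\in P(n)$; $i\oplus j=t+m$ if $i\in P(n),j\in H(n)$; $i\oplus j=s+m$ if $i\in H(n),j\in P(n)$; $i\oplus j=k$ if $i,j\in H(n)$. Then $(G(n),\oplus)$ is a gyrogroup with identity $e=0$. Powers are defined by $a^1=a$, $a^{k+1}=a^k\oplus a$. The power graph $P(G(n))$ is the simple undirected graph with vertex set $G(n)$ in which distinct vertices $u,v$ are adjacent if and only if $u^k=v$ or $v^k=u$ for some positive integer $k$. For a vertex $u$ of a connected graph, let $deg_k(u)$ (resp. $Deg_k(u)$) be the number of vertices at distance (resp. detour distance, i.e. length of a longest path) exactly $k$ from $u$. The distance degree sequence of $u$ is $dds(u)=(deg_0(u),deg_1(u),\dots,deg_{ec(u)}(u))$, where $ec(u)$ is the eccentricity, and the detour distance degree sequence is $dds_D(u)=(Deg_0(u),\dots,Deg_{ec_D(u)}(u))$, where $ec_D(u)$ is the detour eccentricity. $dds(G)$ (resp. $dds_D(G)$) is the collection of these sequences over all vertices; an exponent $s^{r}$ indicates the sequence $s$ occurs for $r$ vertices. *)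

From HB Require Import structures.
From mathcomp Require Import all_boot all_order.
From mathcomp Require Import boolp.
Unset Strict Implicit. Unset Printing Implicit Defensive.

(* m = 2^(n-1); P(n) = {0..m-1}, H(n) = {m..2^n-1}, G(n) = {0..2^n-1}. *)
Definition gm (n : nat) : nat := 2 ^ n.-1.

Definition oplus (n i j : nat) : nat :=
  let m := gm n in
  let t := (i + j) %% m in
  let s := (i + (m %/ 2 - 1) * j) %% m in
  let k := ((m %/ 2 + 1) * i + (m %/ 2 - 1) * j) %% m in
  if i < m then (if j < m then t else t + m)
  else (if j < m then s + m else k).

(* Powers: a^1 = a, a^(k+1) = a^k (+) a  (only used for k >= 1). *)
Definition gpow (n a k : nat) : nat := iter k.-1 (fun x => oplus n x a) a.

Notation vtx n := ('I_(2 ^ n)).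

Definition padj (n : nat) : rel (vtx n) := fun u v =>
  (u != v) &&
  `[< exists k, 0 < k /\ (gpow n u k = v \/ gpow n v k = u) >].

Definition dist_is (n : nat) (u v : vtx n) (k : nat) : Prop :=
  (exists p : seq (vtx n), path (padj n) u p /\ last u p = v /\ size p = k) /\
  (forall p : seq (vtx n), path (padj n) u p -> last u p = v -> k <= size p).

Definition detour_is (n : nat) (u v : vtx n) (k : nat) : Prop :=
  (exists p : seq (vtx n),
      path (padj n) u p /\ uniq (u :: p) /\ last u p = v /\ size p = k) /\
  (forall p : seq (vtx n),
      path (padj n) u p -> uniq (u :: p) -> last u p = v -> size p <= k).

Definition deg (n : nat) (u : vtx n) (k : nat) : nat :=
  #|[set v : vtx n | `[< dist_is n u v k >]]|.
Definition Deg (n : nat) (u : vtx n) (k : nat) : nat :=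
  #|[set v : vtx n | `[< detour_is n u v k >]]|.

Definition ecc_is (n : nat) (u : vtx n) (e : nat) : Prop :=
  (forall v, exists k, dist_is n u v k /\ k <= e) /\ (exists v, dist_is n u v e).
Definition eccD_is (n : nat) (u : vtx n) (e : nat) : Prop :=
  (forall v, exists k, detour_is n u v k /\ k <= e) /\ (exists v, detour_is n u v e).

Definition dds_is (n : nat) (u : vtx n) (s : seq nat) : Prop :=
  exists e, ecc_is n u e /\ s = [seq deg n u k | k <- iota 0 e.+1].
Definition ddsD_is (n : nat) (u : vtx n) (s : seq nat) : Prop :=
  exists e, eccD_is n u e /\ s = [seq Deg n u k | k <- iota 0 e.+1].

From mathcomp Require Import all_boot.
From mathcomp Require Import boolp.
From mathcomp Require Import zify.

Set Implicit Arguments.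
Unset Strict Implicit.
Unset Printing Implicit Defensive.

(* In G(n) the identity 0 is a power of every element, on P(n) the operation is
   addition in Z/2^(n-1), and the powers of h in H(n) alternate between h and 0.
   Since gcd(a, 2^t) is always a power of 2, the cyclic subgroups of Z/2^t form a
   chain, so any two elements of P(n) are adjacent.  Hence the power graph is the
   complete graph on P(n) with one pendant vertex, attached to 0, for each element
   of H(n).  There every vertex is within distance 2 of every other one, and a
   simple path can visit a pendant vertex only at an end, so a longest path
   between two vertices runs through all of P(n): this gives both profiles. *)

(** * Cyclic subgroups of Z/2^t *)

Lemma dvdn_pfactor_total p t d1 d2 : prime p ->
  d1 %| p ^ t -> d2 %| p ^ t -> (d1 %| d2) || (d2 %| d1).
Proof.
move=> p_pr /(dvdn_pfactor _ _ p_pr)[x _ ->] /(dvdn_pfactor _ _ p_pr)[y _ ->].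
by rewrite !dvdn_Pexp2l ?prime_gt1 // leq_total.
Qed.

Lemma modn_mul_gcd a b m : 0 < a -> 0 < m -> gcdn a m %| b ->
  exists2 k, 0 < k & (k * a) %% m = b %% m.
Proof.
move=> a_gt0 m_gt0 gcd_b; case: (egcdnP m a_gt0) => km kn Bezout _.
have km_a : km * (b %/ gcdn a m) * a = kn * (b %/ gcdn a m) * m + b.
  by rewrite mulnAC Bezout mulnDl mulnAC [gcdn a m * _]mulnC divnK.
exists (km * (b %/ gcdn a m) + m); first by rewrite addn_gt0 m_gt0 orbT.
by rewrite mulnDl km_a [m * a]mulnC addnAC -mulnDl modnMDl.
Qed.

Lemma pow2_multiples_chain t a b : a < 2 ^ t -> b < 2 ^ t ->
  exists2 k, 0 < k & (k * a) %% 2 ^ t = b \/ (k * b) %% 2 ^ t = a.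
Proof.
have M_gt0 : 0 < 2 ^ t by rewrite expn_gt0.
wlog gcd_ab : a b / gcdn a (2 ^ t) %| gcdn b (2 ^ t).
  move=> W a_lt b_lt.
  have := dvdn_pfactor_total (p := 2) isT (dvdn_gcdr a (2 ^ t)) (dvdn_gcdr b (2 ^ t)).
  case/orP => gcd_ab.
    exact: W.
  by have [k k_gt0 [] ?] := W b a gcd_ab b_lt a_lt; exists k => //; [right|left].
move=> a_lt b_lt; case: (posnP a) => [a0|a_gt0].
  by exists (2 ^ t) => //; right; rewrite a0 modnMr.
have [k k_gt0 ka] := modn_mul_gcd a_gt0 M_gt0 (dvdn_trans gcd_ab (dvdn_gcdl b _)).
by exists k => //; left; rewrite ka modn_small.
Qed.

Lemma gm_gt0 n : 0 < gm n.
Proof. by rewrite expn_gt0. Qed.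

Lemma gm_ge4 n : 3 <= n -> 4 <= gm n.
Proof. by move=> n_ge3; rewrite (@leq_exp2l 2 2) //; lia. Qed.

Lemma expn_gm n : 0 < n -> 2 ^ n = gm n + gm n.
Proof. by move=> n_gt0; rewrite /gm -{1}(prednK n_gt0) expnS mul2n addnn. Qed.

Lemma oplus_PP n i j : i < gm n -> j < gm n -> oplus n i j = (i + j) %% gm n.
Proof. by move=> i_lt j_lt; rewrite /oplus i_lt j_lt. Qed.

Lemma gpow_P n a k : a < gm n -> 0 < k -> gpow n a k = (k * a) %% gm n.
Proof.
case: k => // k a_lt _; rewrite /gpow /=.
elim: k => [|k IHk] /=; first by rewrite mul1n modn_small.
by rewrite IHk oplus_PP ?ltn_pmod ?gm_gt0 // modnDml [k.+2 * a]mulSn addnC.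
Qed.

Lemma gpow_H n a k : 3 <= n -> gm n <= a < gm n + gm n -> 0 < k ->
  gpow n a k = if odd k then a else 0.
Proof.
move=> n_ge3 /andP[a_ge a_lt]; case: k => // k _; rewrite /gpow /=.
have m_ge4 := gm_ge4 n_ge3.
have zero_a : oplus n 0 a = a.
  rewrite /oplus gm_gt0 ltnNge a_ge add0n -[in LHS](subnK a_ge) modnDr.
  rewrite modn_small ?subnK //; lia.
have half : (gm n %/ 2 + 1) + (gm n %/ 2 - 1) = gm n.
  rewrite /gm -(prednK (_ : 0 < n.-1)); last lia.
  by rewrite expnS mulKn //; lia.
have a_a : oplus n a a = 0 by rewrite /oplus ltnNge a_ge -mulnDl half modnMr.
elim: k => [|k IHk] //=.
by rewrite IHk; case: (odd k); rewrite /= ?zero_a ?a_a.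
Qed.

Lemma gpow_lt n a k : a < gm n -> 0 < k -> gpow n a k < gm n.
Proof. by move=> a_lt k_gt0; rewrite gpow_P // ltn_pmod ?gm_gt0. Qed.

Lemma gpow_double_gm n a : 3 <= n -> a < gm n + gm n -> gpow n a (2 * gm n) = 0.
Proof.
move=> n_ge3 a_lt; have k_gt0 : 0 < 2 * gm n by rewrite muln_gt0 gm_gt0.
case: (ltnP a (gm n)) => [a_lt_m|a_ge]; first by rewrite gpow_P // mulnAC modnMl.
by rewrite gpow_H ?oddM //; apply/andP.
Qed.

Lemma gpow_neighbour n a k : 3 <= n -> a < gm n + gm n -> 0 < k ->
  gpow n a k != a -> (gpow n a k == 0) || (a < gm n) && (gpow n a k < gm n).
Proof.
move=> n_ge3 a_lt k_gt0; case: (ltnP a (gm n)) => [a_lt_m|a_ge] /=.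
  by rewrite gpow_lt ?orbT.
by rewrite gpow_H ?a_ge //; case: (odd k); rewrite ?eqxx.
Qed.

Lemma padjE n (u v : 'I_(2 ^ n)) : 3 <= n ->
  padj n u v =
  (u != v) && [|| val u == 0, val v == 0 | (val u < gm n) && (val v < gm n)].
Proof.
move=> n_ge3; rewrite /padj; have [<-|/negPf uv] := eqVneq u v; first by [].
rewrite -val_eqE /= in uv; rewrite /=.
have lt2m (x : 'I_(2 ^ n)) : val x < gm n + gm n.
  by rewrite -expn_gm ?ltn_ord //; lia.
apply/asboolP/idP => [[k [k_gt0 [uv_pow|vu_pow]]]|].
- move: (gpow_neighbour n_ge3 (lt2m u) k_gt0); rewrite uv_pow eq_sym uv.
  by case/(_ isT)/orP => ->; rewrite ?orbT.
- move: (gpow_neighbour n_ge3 (lt2m v) k_gt0); rewrite vu_pow uv.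
  by case/(_ isT)/orP => [->|/andP[-> ->]]; rewrite ?orbT.
have k_gt0 : 0 < 2 * gm n by rewrite muln_gt0 gm_gt0.
case/or3P => [/eqP u0|/eqP v0|/andP[u_lt v_lt]].
- by exists (2 * gm n); split => //; right; rewrite u0 gpow_double_gm ?lt2m.
- by exists (2 * gm n); split => //; left; rewrite v0 gpow_double_gm ?lt2m.
have [k k_gt0' uv_mul] := pow2_multiples_chain u_lt v_lt.
by exists k; split => //; rewrite !gpow_P.
Qed.

Lemma card_ord_lt m k : k <= m -> #|[set i : 'I_m | i < k]| = k.
Proof.
move=> km; have widen_inj : injective (widen_ord km).
  by move=> i j /(congr1 val) /= /val_inj.
rewrite -[RHS]card_ord -cardsT -[RHS](card_imset _ widen_inj).
apply: eq_card => i; rewrite inE.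
apply/idP/imsetP => [ik|[j _ ->]]; last exact: (ltn_ord j).
by exists (Ordinal ik); last exact: val_inj.
Qed.

Definition gyro_P n : {set 'I_(2 ^ n)} := [set x : 'I_(2 ^ n) | x < gm n].

Definition gyro_id n : 'I_(2 ^ n) := Ordinal (expn_gt0 2 n).

Lemma padj_clique_pendants n : 3 <= n -> forall x y, padj n x y =
  (x != y) && [|| x == gyro_id n, y == gyro_id n | (x \in gyro_P n) && (y \in gyro_P n)].
Proof. by move=> n_ge3 x y; rewrite padjE // !inE -!val_eqE. Qed.

Lemma card_gyro_P n : #|gyro_P n| = gm n.
Proof. by apply: card_ord_lt; rewrite leq_exp2l // leq_pred. Qed.

Lemma card_gyro_H n : 0 < n -> #|~: gyro_P n| = gm n.
Proof.
move=> n_gt0; have := cardsC (gyro_P n); rewrite card_gyro_P card_ord => card_G.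
by apply/eqP; rewrite -(eqn_add2l (gm n)) card_G -expn_gm.
Qed.

(* [dds_is n] and [ddsD_is n] unfold to [level_profile (walk_dist (padj n))] and
   [level_profile (detour_dist (padj n))]. *)
Section LevelProfile.
Variables (T : finType) (dist : T -> T -> nat -> Prop).

Definition level_profile (u : T) (s : seq nat) : Prop :=
  exists E, ((forall v, exists k, dist u v k /\ k <= E) /\ (exists v, dist u v E)) /\
    s = [seq #|[set v | `[< dist u v k >]]| | k <- iota 0 E.+1].

Lemma level_profile_of u (d : T -> nat) E s :
  (forall v k, dist u v k <-> k = d v) ->
  (forall v, d v <= E) -> (exists v, d v = E) ->
  [seq #|[set v | d v == k]| | k <- iota 0 E.+1] = s -> level_profile u s.
Proof.
move=> distE d_le [w dw] <-; exists E; split; first split.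
- by move=> v; exists (d v); rewrite distE.
- by exists w; rewrite distE.
apply/eq_map => k; apply: eq_card => v; rewrite !inE.
by apply/eqP/asboolP => [<-|/distE ->]; rewrite ?distE.
Qed.

Lemma card_level (d : T -> nat) k (A : {set T}) :
  (forall v, (d v == k) = (v \in A)) -> #|[set v | d v == k]| = #|A|.
Proof. by move=> dA; apply: eq_card => v; rewrite inE dA. Qed.

Lemma level_counts_gap (d : T -> nat) a g b :
  (forall v, d v < a \/ a + g <= d v) ->
  [seq #|[set v | d v == k]| | k <- iota 0 (a + g + b)] =
  [seq #|[set v | d v == k]| | k <- iota 0 a] ++ nseq g 0 ++
  [seq #|[set v | d v == k]| | k <- iota (a + g) b].
Proof.
move=> d_gap; rewrite !iotaD !map_cat -catA add0n; congr (_ ++ _ ++ _).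
elim: g a d_gap => // g IHg a d_gap /=; rewrite -(IHg a.+1); last first.
  by move=> v; case: (d_gap v); [left|right]; lia.
congr (_ :: _); apply: eq_card0 => v; rewrite !inE.
by apply/eqP => dva; case: (d_gap v); lia.
Qed.

End LevelProfile.

Section Walks.
Variables (T : finType) (e : rel T).

Definition walk_dist (u v : T) (k : nat) : Prop :=
  (exists s, path e u s /\ last u s = v /\ size s = k) /\
  (forall s, path e u s -> last u s = v -> k <= size s).

Definition detour_dist (u v : T) (k : nat) : Prop :=
  (exists s, path e u s /\ uniq (u :: s) /\ last u s = v /\ size s = k) /\
  (forall s, path e u s -> uniq (u :: s) -> last u s = v -> size s <= k).

Lemma walk_dist_uniq u v d : walk_dist u v d -> forall k, walk_dist u v k <-> k = d.
Proof.
move=> dist_d k; split=> [dist_k|->//].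
case: dist_d dist_k => [[s [es [ls <-]]] d_min] [[s' [es' [ls' <-]]] k_min].
by apply/eqP; rewrite eqn_leq k_min ?d_min.
Qed.

Lemma detour_dist_uniq u v d :
  detour_dist u v d -> forall k, detour_dist u v k <-> k = d.
Proof.
move=> dist_d k; split=> [dist_k|->//].
case: dist_d dist_k => [[s [es [us [ls <-]]]] d_max] [[s' [es' [us' [ls' <-]]]] k_max].
by apply/eqP; rewrite eqn_leq d_max ?k_max.
Qed.

End Walks.

Lemma uniq_last_head (T : eqType) (u : T) s : uniq (u :: s) -> last u s = u -> s = [::].
Proof.
case: s => // y s /andP[u_notin _] /= lu.
by rewrite -lu mem_last in u_notin.
Qed.

(** * A clique with pendant vertices *)

Section CliqueWithPendants.
Variables (T : finType) (e : rel T) (P : {set T}) (c : T) (p q : nat).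
Hypothesis Pc : c \in P.
Hypothesis eE :
  forall x y, e x y = (x != y) && [|| x == c, y == c | (x \in P) && (y \in P)].
Hypothesis card_P : #|P| = p.
Hypothesis card_notP : #|~: P| = q.
Hypothesis p_ge3 : 2 < p.
Hypothesis q_gt0 : 0 < q.

Lemma card_T : #|T| = p + q.
Proof. by rewrite -(cardsC P) card_P card_notP. Qed.

Lemma notP_neq_c x : x \notin P -> x != c.
Proof. by apply: contraNneq => ->. Qed.

Lemma adj_cl x : e c x = (x != c).
Proof. by rewrite eE eqxx /= andbT eq_sym. Qed.

Lemma adj_cr x : e x c = (x != c).
Proof. by rewrite eE eqxx /= orbT andbT. Qed.

Lemma adj_notPl x y : x \notin P -> e x y = (y == c).
Proof.
move=> Px; rewrite eE (negPf (notP_neq_c Px)) (negPf Px) /= orbF.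
by case: (y =P c) => [->|_]; rewrite ?andbF ?andbT ?(notP_neq_c Px).
Qed.

Lemma adj_notPr x y : y \notin P -> e x y = (x == c).
Proof.
move=> Py; rewrite eE (negPf (notP_neq_c Py)) (negPf Py) andbF orbF.
by case: (x =P c) => [->|_]; rewrite ?andbF ?andbT // eq_sym (notP_neq_c Py).
Qed.

Lemma adj_P x y : x \in P -> x != c -> e x y = (y != x) && (y \in P).
Proof.
move=> Px xc; rewrite eE (negPf xc) Px eq_sym /=.
by case: (y =P c) => [->|_]; rewrite ?Pc.
Qed.

Lemma path_in_P x s : x \in P -> {subset s <= P} -> uniq (x :: s) -> path e x s.
Proof.
elim: s x => [//|y s IHs] x Px sP /andP[x_notin ys_uniq].
have Py : y \in P by apply: sP; rewrite inE eqxx.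
rewrite /= eE Px Py !orbT andbT IHs //; last first.
  by move=> z zs; apply: sP; rewrite inE zs orbT.
by move: x_notin; rewrite inE => /norP[-> _].
Qed.

Lemma simple_path_inner x y s :
  path e x (y :: s) -> uniq [:: x, y & s] -> {subset belast y s <= P}.
Proof.
elim: s x y => [|z s IHs] x y //= /and3P[exy eyz ezs] /and3P[x_notin y_notin zs_uniq] w.
rewrite inE => /orP[/eqP->|w_in]; last first.
  by apply: (IHs y z) w_in; rewrite /= ?eyz ?y_notin.
apply: contraT => Py.
have xc : x = c by apply/eqP; rewrite -(adj_notPr x Py).
have zc : z = c by apply/eqP; rewrite -(adj_notPl z Py).
by move: x_notin; rewrite xc -zc !inE eqxx !orbT.
Qed.

Lemma card_P_ends u v : u != v -> #|P :|: [set u; v]| = (u \notin P) + (v \notin P) + p.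
Proof.
move=> uv; rewrite setUC -setUA cardsU1 cardsU1 card_P in_setU1 (negPf uv).
by rewrite addnA.
Qed.

Lemma simple_path_size u s :
  path e u s -> uniq (u :: s) -> size s < #|P :|: [set u; last u s]|.
Proof.
move=> es us; rewrite -[(size s).+1]/(size (u :: s)) -(card_uniqP us).
apply/subset_leq_card/subsetP => x; rewrite !inE => /orP[->|]; first by rewrite orbT.
case: s es us => // y s es us /=.
have := mem_rcons (belast y s) (last y s) x; rewrite -lastI inE => ->.
by case/orP => [->|/(simple_path_inner es us) ->]; rewrite ?orbT.
Qed.

Lemma simple_path_c_notP u s : u = c -> path e u s -> uniq (u :: s) ->
  last u s \notin P -> size s <= 1.
Proof.
move=> ->; case/lastP: s => // t y.
rewrite -rcons_cons rcons_path rcons_uniq last_rcons size_rcons.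
move=> /andP[_ ety] /andP[_ ut] Py; rewrite adj_notPr // in ety.
by rewrite (uniq_last_head ut (eqP ety)).
Qed.

Lemma simple_path_notP_c u s : u \notin P -> path e u s -> uniq (u :: s) ->
  last u s = c -> size s <= 1.
Proof.
move=> Pu; case: s => //= y s /andP[euy _] /andP[_ ys] lc.
rewrite adj_notPl // in euy; rewrite -(eqP euy) in lc.
by rewrite (uniq_last_head ys lc).
Qed.

Lemma simple_path_notP_notP u s : u \notin P -> path e u s -> uniq (u :: s) ->
  last u s \notin P -> size s <= 2.
Proof.
move=> Pu; case: s => //= y s /andP[euy es] /andP[_ ys] ly.
rewrite adj_notPl // in euy.
exact: (simple_path_c_notP (eqP euy) es ys ly).
Qed.

Lemma clique_path a b : a \in P -> b \in P -> a != b ->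
  exists s, [/\ path e a s, uniq (a :: s), last a s = b, size s = p.-1 & {subset s <= P}].
Proof.
move=> Pa Pb ab; set s := rcons (enum (P :\: [set a; b])) b.
have sP : {subset s <= P}.
  by move=> x; rewrite mem_rcons !inE mem_enum !inE => /orP[/eqP->|/andP[_]].
have as_uniq : uniq (a :: s).
  rewrite /= rcons_uniq mem_rcons !inE !mem_enum !inE !eqxx (negPf ab) /=.
  by rewrite orbT enum_uniq.
have as_P : a :: s =i P.
  move=> x; rewrite !inE mem_rcons !inE mem_enum !inE.
  have [->|_] := eqVneq x a; first by rewrite Pa.
  by have [->|_] := eqVneq x b; rewrite ?eqxx ?orbT ?Pb.
exists s; split => //; first exact: path_in_P; first exact: last_rcons.
by have := card_uniqP as_uniq; rewrite (eq_card as_P) card_P => ->.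
Qed.

Definition detour_fun u v :=
  if v == u then 0 else
  if u \in P then (if v \in P then p.-1 else if u == c then 1 else p)
  else (if v == c then 1 else if v \in P then p else 2).

Lemma detour_fun_witness u v :
  exists s, [/\ path e u s, uniq (u :: s), last u s = v & size s = detour_fun u v].
Proof.
rewrite /detour_fun; have [->|vu] := eqVneq v u; first by exists [::].
have uv : u != v by rewrite eq_sym.
have [Pu|Pu] := boolP (u \in P); have [Pv|Pv] := boolP (v \in P).
- by have [s [es us ls ss _]] := clique_path Pu Pv uv; exists s.
- have [uc|uc] := eqVneq u c.
    by exists [:: v]; rewrite /= uc adj_cl notP_neq_c // inE -uc uv.
  have [s [es us ls ss sP]] := clique_path Pu Pc uc.
  exists (rcons s v); split.
  + by rewrite rcons_path es ls adj_cl notP_neq_c.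
  + by rewrite -rcons_cons rcons_uniq us andbT inE negb_or vu (contra (@sP v) Pv).
  + exact: last_rcons.
  + by rewrite size_rcons ss prednK // ltnW // ltnW.
- have [vc|vc] := eqVneq v c.
    by exists [:: c]; rewrite /= adj_notPl // eqxx inE notP_neq_c.
  rewrite eq_sym in vc; have [s [es us ls ss sP]] := clique_path Pc Pv vc.
  exists (c :: s); split => //.
  + by rewrite /= adj_notPl // eqxx es.
  + by rewrite cons_uniq us andbT inE negb_or notP_neq_c // (contra (@sP u) Pu).
  + by rewrite /= ss prednK // ltnW // ltnW.
- rewrite (negPf (notP_neq_c Pv)); exists [:: c; v]; split => //=.
  + by rewrite adj_notPl // eqxx adj_cl notP_neq_c.
  + by rewrite !inE negb_or notP_neq_c // uv eq_sym notP_neq_c.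
Qed.

Lemma detour_fun_max u s :
  path e u s -> uniq (u :: s) -> size s <= detour_fun u (last u s).
Proof.
move=> es us; have s_lt := simple_path_size es us.
rewrite /detour_fun; set v := last u s in s_lt *.
have [vu|vu] := eqVneq v u; first by rewrite (uniq_last_head us vu).
rewrite card_P_ends 1?eq_sym // in s_lt.
have [Pu|Pu] := boolP (u \in P); have [Pv|Pv] := boolP (v \in P).
- lia.
- by have [uc|_] := eqVneq u c; [exact: simple_path_c_notP uc es us Pv | lia].
- by have [vc|_] := eqVneq v c; [exact: simple_path_notP_c Pu es us vc | lia].
- by rewrite (negPf (notP_neq_c Pv)); exact: simple_path_notP_notP Pu es us Pv.
Qed.

Lemma detour_distE u v k : detour_dist e u v k <-> k = detour_fun u v.
Proof.
apply: detour_dist_uniq; split.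
  by have [s [es us ls ss]] := detour_fun_witness u v; exists s.
by move=> s es us <-; exact: detour_fun_max.
Qed.

Definition dist_fun u v := if v == u then 0 else if e u v then 1 else 2.

Lemma walk_distE u v k : walk_dist e u v k <-> k = dist_fun u v.
Proof.
apply: walk_dist_uniq; rewrite /dist_fun.
have [->|vu] := eqVneq v u; first by split => //; exists [::].
have [euv|neuv] := boolP (e u v).
  split; first by exists [:: v]; rewrite /= euv.
  by case=> //= _ uv; rewrite uv eqxx in vu.
have uc : u != c by apply: contraNneq neuv => uc; rewrite uc adj_cl -uc.
have vc : v != c by apply: contraNneq neuv => vc; rewrite vc adj_cr -vc eq_sym.
split; first by exists [:: c; v]; rewrite /= adj_cr adj_cl uc vc.
case=> [|y [|z s]] //=; first by move=> _ uv; rewrite uv eqxx in vu.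
by rewrite andbT => euy yv; rewrite -yv euy in neuv.
Qed.

Lemma exists_notP : exists w, w \notin P.
Proof.
have /card_gt0P[w] : 0 < #|~: P| by rewrite card_notP.
by rewrite inE; exists w.
Qed.

Lemma card_P_del u : u \in P -> #|P :\ u| = p - 1.
Proof. by move=> Pu; rewrite -card_P (cardsD1 u P) Pu add1n subn1. Qed.

Lemma card_notP_del u : u \notin P -> #|~: P :\ u| = q - 1.
Proof. by move=> Pu; rewrite -card_notP (cardsD1 u (~: P)) inE Pu add1n subn1. Qed.

Lemma exists_P_neq_c : exists2 w, w \in P & w != c.
Proof.
have /card_gt0P[w] : 0 < #|P :\ c| by rewrite card_P_del // subn_gt0 ltnW.
by rewrite !inE => /andP[wc Pw]; exists w.
Qed.

Lemma dds_center : level_profile (walk_dist e) c [:: 1; p + q - 1].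
Proof.
have dc v : dist_fun c v = (v != c) by rewrite /dist_fun adj_cl; case: (v =P c).
have [w Pw] := exists_notP.
apply: (level_profile_of (d := dist_fun c) (E := 1)).
- exact: walk_distE.
- by move=> v; rewrite dc leq_b1.
- by exists w; rewrite dc notP_neq_c.
rewrite /= (card_level (A := [set c])) ?cards1; last first.
  by move=> v; rewrite dc !inE; case: (v =P c).
rewrite (card_level (A := [set~ c])) ?cardsC1 ?card_T ?subn1 //.
by move=> v; rewrite dc !inE; case: (v =P c).
Qed.

Lemma dds_clique u : u \in P -> u != c -> level_profile (walk_dist e) u [:: 1; p - 1; q].
Proof.
move=> Pu uc.
have du v : dist_fun u v = if v == u then 0 else if v \in P then 1 else 2.
  by rewrite /dist_fun adj_P //; case: (v == u).
have [w Pw] := exists_notP.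
apply: (level_profile_of (d := dist_fun u) (E := 2)).
- exact: walk_distE.
- by move=> v; rewrite du; case: (v == u) => //; case: (v \in P).
- by exists w; rewrite du (negPf Pw); have [wu|//] := eqVneq w u; rewrite wu Pu in Pw.
rewrite /= (card_level (A := [set u])) ?cards1; last first.
  by move=> v; rewrite du !inE; case: (v == u) => //; case: (v \in P).
rewrite (card_level (A := P :\ u)) ?card_P_del //; last first.
  by move=> v; rewrite du !inE; case: (v == u) => //; case: (v \in P).
rewrite (card_level (A := ~: P)) ?card_notP //.
by move=> v; rewrite du !inE; have [->|_] := eqVneq v u; rewrite ?Pu //; case: (v \in P).
Qed.

Lemma dds_pendant u : u \notin P -> level_profile (walk_dist e) u [:: 1; 1; p + q - 2].
Proof.
move=> Pu; have uc := notP_neq_c Pu.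
have du v : dist_fun u v = if v == u then 0 else if v == c then 1 else 2.
  by rewrite /dist_fun adj_notPl.
have [w Pw wc] := exists_P_neq_c.
apply: (level_profile_of (d := dist_fun u) (E := 2)).
- exact: walk_distE.
- by move=> v; rewrite du; case: (v == u) => //; case: (v == c).
- exists w; rewrite du (negPf wc); have [wu|//] := eqVneq w u.
  by rewrite -wu Pw in Pu.
rewrite /= (card_level (A := [set u])) ?cards1; last first.
  by move=> v; rewrite du !inE; case: (v == u) => //; case: (v == c).
rewrite (card_level (A := [set c])) ?cards1; last first.
  move=> v; rewrite du !inE.
  by have [->|_] := eqVneq v u; rewrite ?(negPf uc) //; case: (v == c).
rewrite (card_level (A := ~: [set u; c])); last first.
  by move=> v; rewrite du !inE; case: (v == u) => //; case: (v == c).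
by move: (cardsC [set u; c]); rewrite cards2 uc card_T /= => <-; rewrite addKn.
Qed.

Lemma ddsD_center :
  level_profile (detour_dist e) c (1 :: q :: nseq (p - 3) 0 ++ [:: p - 1]).
Proof.
have dc v : detour_fun c v = if v == c then 0 else if v \in P then p.-1 else 1.
  by rewrite /detour_fun Pc eqxx.
have [w Pw wc] := exists_P_neq_c.
apply: (level_profile_of (d := detour_fun c) (E := p.-1)).
- exact: detour_distE.
- by move=> v; rewrite dc; case: (v == c) => //; case: (v \in P) => //; lia.
- by exists w; rewrite dc (negPf wc) Pw.
rewrite (_ : p.-1.+1 = 2 + (p - 3) + 1); last lia.
rewrite level_counts_gap; last first.
  by move=> v; rewrite dc; case: (v == c); last case: (v \in P); lia.
rewrite (_ : 2 + (p - 3) = p.-1) /=; last lia.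
rewrite (card_level (A := [set c])) ?cards1; last first.
  by move=> v; rewrite dc !inE; case: (v == c) => //; case: (v \in P); lia.
rewrite (card_level (A := ~: P)) ?card_notP; last first.
  move=> v; rewrite dc !inE; have [->|_] := eqVneq v c; rewrite ?Pc //.
  by case: (v \in P); lia.
rewrite (card_level (A := P :\ c)) ?card_P_del //.
move=> v; rewrite dc !inE; case: (v == c); first lia.
by case: (v \in P); lia.
Qed.

Lemma ddsD_clique u : u \in P -> u != c ->
  level_profile (detour_dist e) u (1 :: nseq (p - 2) 0 ++ [:: p - 1; q]).
Proof.
move=> Pu uc.
have du v : detour_fun u v = if v == u then 0 else if v \in P then p.-1 else p.
  by rewrite /detour_fun Pu (negPf uc).
have [w Pw] := exists_notP.
apply: (level_profile_of (d := detour_fun u) (E := p)).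
- exact: detour_distE.
- by move=> v; rewrite du; case: (v == u) => //; case: (v \in P) => //; lia.
- by exists w; rewrite du (negPf Pw); have [wu|//] := eqVneq w u; rewrite wu Pu in Pw.
rewrite (_ : p.+1 = 1 + (p - 2) + 2); last lia.
rewrite level_counts_gap; last first.
  by move=> v; rewrite du; case: (v == u); last case: (v \in P); lia.
rewrite (_ : 1 + (p - 2) = p.-1) /=; last lia.
rewrite prednK; last lia.
rewrite (card_level (A := [set u])) ?cards1; last first.
  by move=> v; rewrite du !inE; case: (v == u) => //; case: (v \in P); lia.
rewrite (card_level (A := P :\ u)) ?card_P_del //; last first.
  move=> v; rewrite du !inE; case: (v == u); first lia.
  by case: (v \in P); lia.
rewrite (card_level (A := ~: P)) ?card_notP //.
move=> v; rewrite du !inE.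
by have [->|_] := eqVneq v u; rewrite ?Pu; case: (v \in P); lia.
Qed.

Lemma ddsD_pendant u : u \notin P ->
  level_profile (detour_dist e) u ([:: 1; 1; q - 1] ++ nseq (p - 3) 0 ++ [:: p - 1]).
Proof.
move=> Pu; have uc := notP_neq_c Pu.
have du v : detour_fun u v =
    if v == u then 0 else if v == c then 1 else if v \in P then p else 2.
  by rewrite /detour_fun (negPf Pu).
have [w Pw wc] := exists_P_neq_c.
apply: (level_profile_of (d := detour_fun u) (E := p)).
- exact: detour_distE.
- move=> v; rewrite du.
  by case: (v == u) => //; case: (v == c) => //; case: (v \in P) => //; lia.
- exists w; rewrite du (negPf wc) Pw; have [wu|//] := eqVneq w u.
  by rewrite -wu Pw in Pu.
rewrite (_ : p.+1 = 3 + (p - 3) + 1); last lia.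
rewrite level_counts_gap; last first.
  by move=> v; rewrite du; case: (v == u); last case: (v == c); last case: (v \in P); lia.
rewrite (_ : 3 + (p - 3) = p) /=; last lia.
rewrite (card_level (A := [set u])) ?cards1; last first.
  move=> v; rewrite du !inE; case: (v == u) => //.
  by case: (v == c); last case: (v \in P); lia.
rewrite (card_level (A := [set c])) ?cards1; last first.
  move=> v; rewrite du !inE; have [->|_] := eqVneq v u; rewrite ?(negPf uc) //.
  by case: (v == c) => //; case: (v \in P); lia.
rewrite (card_level (A := ~: P :\ u)) ?card_notP_del //; last first.
  move=> v; rewrite du !inE; case: (v == u) => //.
  have [->|_] := eqVneq v c; rewrite ?Pc //.
  by case: (v \in P); lia.
rewrite (card_level (A := P :\ c)) ?card_P_del //.
move=> v; rewrite du !inE.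
have [->|_] := eqVneq v u; rewrite ?(negPf Pu) ?andbF; first lia.
by case: (v == c) => //; case: (v \in P); lia.
Qed.

End CliqueWithPendants.

Theorem mainTheorem11 (n : nat) (hn : 3 <= n) :
  let N := 2 ^ n.-1 in
  forall u : 'I_(2 ^ n),
    (val u = 0 ->
       dds_is n u [:: 1; 2 ^ n - 1] /\
       ddsD_is n u (1 :: N :: nseq (N - 3) 0 ++ [:: N - 1])) /\
    (0 < val u < N ->
       dds_is n u [:: 1; N - 1; N] /\
       ddsD_is n u (1 :: nseq (N - 2) 0 ++ [:: N - 1; N])) /\
    (N <= val u ->
       dds_is n u [:: 1; 1; 2 ^ n - 2] /\
       ddsD_is n u ([:: 1; 1; N - 1] ++ nseq (N - 3) 0 ++ [:: N - 1])).
Proof.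
move=> N u; have N_ge4 : 4 <= N := gm_ge4 hn.
have two_n : 2 ^ n = N + N by apply: expn_gm; lia.
have Pc : gyro_id n \in gyro_P n by rewrite inE /= gm_gt0.
have eE := padj_clique_pendants hn.
have card_P := card_gyro_P n.
have card_H : #|~: gyro_P n| = N by apply: card_gyro_H; lia.
have N_ge3 : 2 < N by lia.
have N_gt0 : 0 < N by lia.
split; [|split].
- move=> u0; have -> : u = gyro_id n by apply: val_inj.
  rewrite (_ : 2 ^ n - 1 = N + N - 1) ?two_n //.
  by split; [apply: (dds_center Pc eE) | apply: (ddsD_center Pc eE)].
- case/andP => u_gt0 u_ltN; have Pu : u \in gyro_P n by rewrite inE.
  have uc : u != gyro_id n by rewrite -val_eqE /= -lt0n.
  by split; [apply: (dds_clique Pc eE) | apply: (ddsD_clique Pc eE)].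
- rewrite leqNgt => u_geN; have Hu : u \notin gyro_P n by rewrite inE.
  rewrite (_ : 2 ^ n - 2 = N + N - 2) ?two_n //.
  by split; [apply: (dds_pendant Pc eE) | apply: (ddsD_pendant Pc eE)].
Qed.
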